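(* Let $q$ be an odd prime power and $n\ge 1$ an integer, and let $\mu\in\mathbb{F}_{q^2}$ with $\mu^2=-1$. (i) If $q\equiv1\pmod 4$ and $\gcd(n+1,q(q^2-1)/2)=1$, then $C_n(a)$ is LCD for every $a\in\mathbb{F}_q\setminus\{\mu+2,-\mu+2,\mu-2,-\mu-2\}$. (ii) If $q\equiv 3\pmod 4$, $\gcd(n+1,q)=1$, and $\gcd(n+1,(q^4-1)/2)$ divides $(q-1)/2$, then $C_n(a)$ is LCD for every $a\in\mathbb{F}_q$.
   Context: For $a\in\mathbb{F}_q$ and $n \ge 1$, $T_n(a)$ denotes the $n\times n$ symmetric tridiagonal Toeplitz matrix over $\mathbb{F}_q$ with all diagonal entries equal to $a$, all entries on the first super- and sub-diagonals equal to $1$, and all other entries $0$. $C_n(a)$ is the $[2n,n]$ linear code over $\mathbb{F}_q$ with generator matrix $[I_n \mid T_n(a)]$. A linear code $C$ is LCD if $C\cap C^\perp=\{0\}$ (Euclidean dual). *)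

From mathcomp Require Import all_boot all_order all_algebra all_field.
Set Implicit Arguments. Unset Strict Implicit. Unset Printing Implicit Defensive.
Import GRing.Theory.
Local Open Scope ring_scope.

Definition tridiag (F : fieldType) (n : nat) (a : F) : 'M[F]_n :=
  \matrix_(i < n, j < n)
    if i == j then a
    else if ((i.+1 == j)%N || (j.+1 == i)%N) then 1 else 0.

Definition gen_Cn (F : fieldType) (n : nat) (a : F) : 'M[F]_(n, n + n) :=
  row_mx 1%:M (tridiag n a).

Definition in_code (F : fieldType) (k m : nat) (G : 'M[F]_(k, m)) (c : 'rV[F]_m) :=
  (c <= G)%MS.

Definition in_dual_code (F : fieldType) (k m : nat) (G : 'M[F]_(k, m)) (v : 'rV[F]_m) :=
  forall c : 'rV[F]_m, in_code G c -> v *m c^T = 0.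

Definition is_LCD (F : fieldType) (k m : nat) (G : 'M[F]_(k, m)) :=
  forall v : 'rV[F]_m, in_code G v -> in_dual_code G v -> v = 0.

From mathcomp Require Import all_boot all_order all_algebra all_field all_solvable.
From mathcomp Require Import zify ring.
Set Implicit Arguments. Unset Strict Implicit. Unset Printing Implicit Defensive.
Import GRing.Theory.
Local Open Scope ring_scope.

(* The Gram matrix of [I | T] is I + T^2, so C_n(a) is LCD as soon as
   u (I + T^2) = 0 forces u = 0 (LCD_of_gram).  If not, then over an
   algebraic closure L of F_q the symmetric matrix T = T_n(a) has an
   eigenvalue c with c^2 = -1.  The coordinates of an eigenvector of a
   tridiagonal Toeplitz matrix follow the Lucas sequence U_k(x),
   U_(k+2) = x U_(k+1) - U_k, so x = c - a is a root of U_(n+1)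
   (tridiag_eigen_lucas); writing x = z + z^-1, Binet's formula makes z^2 an
   (n+1)-th root of unity different from 1 (LCD_of_no_lucas_unit).  The
   Frobenius y |-> y^q then pins down z (frob_trace_fixed_unit):
   (i) if -1 = mu^2 in F_q, x lies in F_q and z^(q-1) = 1 or z^(q+1) = 1;
   (ii) if q = 3 (mod 4), c^q = -c, x^(q^2) = x and z^(q^4-1) = 1.
   In both cases the coprimality hypotheses yield a contradiction
   (LCD_split and LCD_inert), from which the corollary follows at once. *)

(* The Lucas sequence U_k(x, 1): U_0 = 0, U_1 = 1, U_(k+2) = x U_(k+1) - U_k.
   Up to a shift and a rescaling of x it is the Chebyshev polynomial of the
   second kind. *)
Fixpoint lucasU (R : nzRingType) (x : R) (k : nat) : R :=
  if k is k1.+1 then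
    (if k1 is k2.+1 then x * lucasU x k1 - lucasU x k2 else 1)
  else 0.

Lemma lucasU_SS (R : nzRingType) (x : R) k :
  lucasU x k.+2 = x * lucasU x k.+1 - lucasU x k.
Proof. by []. Qed.

Section LucasSequence.
Variable R : comNzRingType.
Implicit Types z t : R.

Lemma lucasU_binet z t k :
  z * t = 1 -> lucasU (z + t) k * (z - t) = z ^+ k - t ^+ k.
Proof.
move=> zt; suff: lucasU (z + t) k * (z - t) = z ^+ k - t ^+ k /\
    lucasU (z + t) k.+1 * (z - t) = z ^+ k.+1 - t ^+ k.+1 by case.
elim: k => [|k [IH1 IH2]]; first by rewrite /= mul0r mul1r !expr0 expr1 subrr.
split=> //; rewrite lucasU_SS mulrBl -mulrA IH2 IH1 !exprS.
have -> : z ^+ k - t ^+ k = z * t * (z ^+ k - t ^+ k) by rewrite zt mul1r.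
ring.
Qed.

Lemma lucasU_double z k :
  z * z = 1 -> lucasU (z + z) k.+1 = k.+1%:R * z ^+ k.
Proof.
move=> zz; suff: lucasU (z + z) k.+1 = k.+1%:R * z ^+ k /\
    lucasU (z + z) k.+2 = k.+2%:R * z ^+ k.+1 by case.
elim: k => [|k [IH1 IH2]].
  by rewrite expr0 expr1 mulr1 lucasU_SS /= mulr1 subr0 mulr_natl.
split=> //; rewrite lucasU_SS IH2 IH1 !exprS.
have -> : k.+1%:R * z ^+ k = k.+1%:R * z ^+ k * (z * z) by rewrite zz mulr1.
rewrite -[k.+3]addn3 -[k.+2]addn2 -[k.+1]addn1 !natrD; ring.
Qed.

End LucasSequence.

Lemma lucasU_root (L : fieldType) (z t : L) N :
  z * t = 1 -> lucasU (z + t) N = 0 -> N%:R != 0 :> L ->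
  z ^+ 2 != 1 /\ (z ^+ 2) ^+ N = 1.
Proof.
move=> zt UN0 N0; have z0 : z != 0 by rewrite -unitfE; apply/unitrPr; exists t.
have [zz|z2] := eqVneq (z ^+ 2) 1.
  have tz : t = z by apply: (mulfI z0); rewrite zt -expr2 zz.
  case: N UN0 N0 => [|m]; first by rewrite mulr0n eqxx.
  rewrite tz lucasU_double -?expr2 // => /eqP.
  by rewrite mulf_eq0 expf_eq0 (negbTE z0) andbF orbF => ->.
split=> //; have := lucasU_binet N zt; rewrite UN0 mul0r => /esym/eqP.
rewrite subr_eq0 => /eqP zt_eq.
by rewrite exprAC expr2 {2}zt_eq -exprMn zt expr1n.
Qed.

Lemma expr_gcd_eq1 (R : nzRingType) (w : R) m k :
  w ^+ m = 1 -> w ^+ k = 1 -> w ^+ gcdn m k = 1.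
Proof.
case: m => [|m] wm wk; first by rewrite gcd0n.
have [a b E _] := egcdnP k (ltn0Sn m).
have : w ^+ (a * m.+1) = w ^+ (b * k + gcdn m.+1 k) by rewrite E.
by rewrite exprD [(a * _)%N]mulnC [(b * _)%N]mulnC !exprM wm wk !expr1n mul1r => <-.
Qed.

Lemma expr_coprime_eq1 (R : nzRingType) (w : R) m k :
  w ^+ m = 1 -> w ^+ k = 1 -> coprime m k -> w = 1.
Proof. by move=> wm wk /eqP cmk; rewrite -[w]expr1 -cmk expr_gcd_eq1. Qed.

Lemma expr_half (R : nzRingType) (w : R) k :
  (2 %| k)%N -> (w ^+ 2) ^+ (k %/ 2) = w ^+ k.
Proof. by move=> k2; rewrite -exprM mulnC divnK. Qed.

(* If the "trace" z + t is fixed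
   by the N-th power Frobenius then z is mapped to z or to t, so z is an
   (N - 1)-th or an (N + 1)-th root of unity; conversely the trace is fixed
   as soon as z ^+ (N - 1) = 1.  Here N is a power of the characteristic,
   so y |-> y ^+ N is additive. *)
Section FrobeniusTrace.
Variables (L : fieldType) (N : nat) (z t : L).
Hypotheses (charN : [pchar L].-nat N) (zt : z * t = 1).

Let frobD : (z + t) ^+ N = z ^+ N + t ^+ N.
Proof. exact: exprDn_pchar. Qed.

Let N_gt0 : (0 < N)%N.
Proof. by case/andP: charN. Qed.

Let z_neq0 : z != 0.
Proof. by rewrite -unitfE; apply/unitrPr; exists t. Qed.

Let frobM : z ^+ N * t ^+ N = 1.
Proof. by rewrite -exprMn zt expr1n. Qed.

Lemma frob_trace_fixed_unit :
  (z + t) ^+ N = z + t -> z ^+ N.-1 = 1 \/ z ^+ N.+1 = 1.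
Proof.
rewrite frobD => xN.
have : (z ^+ N - z) * (z ^+ N - t) = 0.
  move: (z ^+ N) (t ^+ N) xN frobM => u v uv_sum uv_prod.
  have -> : (u - z) * (u - t) = u * (u - (z + t)) + z * t by ring.
  by rewrite -uv_sum zt -uv_prod; ring.
move/eqP; rewrite mulf_eq0 !subr_eq0 => /orP[/eqP zN | /eqP zN].
  by left; apply: (mulIf z_neq0); rewrite mul1r -exprSr prednK.
by right; rewrite exprSr zN mulrC.
Qed.

Lemma frob_trace_fixed : z ^+ N.-1 = 1 -> (z + t) ^+ N = z + t.
Proof.
move=> zN1; have zN : z ^+ N = z by rewrite -(prednK N_gt0) exprS zN1 mulr1.
have tN : t ^+ N = t by apply: (mulfI z_neq0); rewrite -{1}zN frobM zt.
by rewrite frobD zN tN.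
Qed.

End FrobeniusTrace.

Section TridiagonalEigen.
Variables (L : fieldType) (n : nat).

Lemma tridiag_sym (b : L) : (tridiag n b)^T = tridiag n b.
Proof. by apply/matrixP => i j; rewrite !mxE eq_sym orbC. Qed.

Lemma tridiag_entry (b : L) (i j : 'I_n) :
  tridiag n b i j
  = b * ((i : nat) == j)%:R + ((i : nat).+1 == j)%:R + ((i : nat) == j.+1)%:R.
Proof.
rewrite mxE [j.+1 == i]eq_sym (_ : (i == j) = (i == j :> nat)) //.
case: (ltngtP i j) => [ij|ji|ij].
- rewrite (ltn_eqF (ltn_trans ij (ltnSn j))) /= mulr0n mulr0 add0r addr0 orbF.
  by case: (_ == _).
- rewrite (gtn_eqF (ltn_trans ji (ltnSn i))) /= mulr0n mulr0 !add0r.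
  by case: (_ == _).
- by rewrite ij !eqn_leq ltnn leqnSn andbF /= mulr1 !addr0.
Qed.

(* Padding turns the eigenvector equation of a
   tridiagonal matrix into a linear recurrence valid at every index. *)
Definition pad (y : 'rV[L]_n) (k : nat) : L :=
  \sum_(i < n) y 0 i * ((i : nat).+1 == k)%:R.

Lemma pad0 y : pad y 0 = 0.
Proof. by apply: big1 => i _; rewrite mulr0. Qed.

Lemma padS y (i : 'I_n) : pad y i.+1 = y 0 i.
Proof.
rewrite /pad (bigD1 i) //= eqxx mulr1 big1 ?addr0 // => j ji.
by rewrite eqSS (inj_eq val_inj) (negbTE ji) mulr0.
Qed.

Lemma pad_out y k : (n <= k)%N -> pad y k.+1 = 0.
Proof.
by move=> nk; apply: big1 => i _; rewrite eqSS ltn_eqF ?mulr0 // (leq_trans _ nk).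
Qed.

(* An eigenvector y of T_n(b) for the eigenvalue c forces c - b to be a
   root of U_(n+1): the padded coordinates satisfy the Lucas recurrence with
   x = c - b, so pad y k = y_0 U_k(x), and pad y (n+1) = 0. *)
Lemma tridiag_eigen_lucas (y : 'rV[L]_n) (b c : L) :
  y != 0 -> y *m tridiag n b = c *: y -> lucasU (c - b) n.+1 = 0.
Proof.
move=> y0 yT; set x := c - b.
have rec k : (k < n)%N -> pad y k.+2 = x * pad y k.+1 - pad y k.
  move=> kn; have := congr1 (fun v : 'rV_n => v 0 (Ordinal kn)) yT.
  rewrite !mxE -(padS y (Ordinal kn)) /=.
  under eq_bigr => i _ do rewrite tridiag_entry /= !mulrDr.
  rewrite !big_split /=.
  have padE j : \sum_(i < n) y 0 i * ((i : nat) == j)%:R = pad y j.+1.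
    by apply: eq_bigr => i _; rewrite eqSS.
  under [X in X + _ + _]eq_bigr => i _ do rewrite mulrCA.
  rewrite -mulr_sumr padE padE -/(pad y k) => E.
  by rewrite /x mulrBl -E; ring.
have padU k : (k <= n)%N ->
    pad y k = pad y 1 * lucasU x k /\ pad y k.+1 = pad y 1 * lucasU x k.+1.
  elim: k => [_|k IH kn]; first by rewrite pad0 /= mulr0 mulr1.
  have [U1 U2] := IH (ltnW kn); split=> //.
  by rewrite rec // U1 U2 lucasU_SS; ring.
have [_] := padU n (leqnn n); rewrite pad_out // => /esym/eqP.
rewrite mulf_eq0 => /orP[/eqP y1|/eqP //].
case/negP: y0; apply/eqP/rowP => i; rewrite mxE -padS.
by have [_ ->] := padU i (ltnW (ltn_ord i)); rewrite y1 mul0r.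
Qed.

End TridiagonalEigen.

(* Massey's criterion (easy direction): a code with generator matrix G is LCD
   as soon as its Gram matrix G G^T is nonsingular.  Indeed a codeword u G
   orthogonal to the code is orthogonal to every row of G, i.e. u G G^T = 0. *)
Lemma LCD_of_gram (F : fieldType) k m (G : 'M[F]_(k, m)) :
  (forall u : 'rV_k, u *m (G *m G^T) = 0 -> u = 0) -> is_LCD G.
Proof.
move=> gramP v /submxP[u ->] v_dual; suff -> : u = 0 by rewrite mul0mx.
apply: gramP; apply/rowP => i; rewrite mulmxA.
transitivity ((u *m G *m (row i G)^T) 0 0).
  by rewrite !mxE; apply: eq_bigr => j _; rewrite !mxE.
by rewrite v_dual ?mxE //; apply: row_sub.
Qed.

Lemma gram_systematic (R : comNzRingType) n (A : 'M[R]_n) :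
  row_mx 1%:M A *m (row_mx 1%:M A)^T = 1%:M + A *m A^T.
Proof. by rewrite tr_row_mx mul_row_col trmx1 mulmx1. Qed.

Lemma gen_Cn_LCD (F : fieldType) n (a : F) :
  (forall u : 'rV_n, u *m (1%:M + tridiag n a *m tridiag n a) = 0 -> u = 0) ->
  is_LCD (gen_Cn n a).
Proof. by move=> H; apply: LCD_of_gram; rewrite gram_systematic tridiag_sym. Qed.

Lemma closed_quadratic_root (L : closedFieldType) (s p : L) :
  exists z : L, z ^+ 2 = s * z - p.
Proof.
have [z] := @solve_monicpoly L 2 (fun i => if i == 0%N then - p else s) isT.
rewrite !big_ord_recr big_ord0 /= expr0 expr1 mulr1 add0r => zE.
by exists z; rewrite zE; ring.
Qed.

(* If u M^2 = -u with u != 0 and c0^2 = -1, then M has an eigenvector whose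
   eigenvalue is a square root of -1: either u M + c0 u (eigenvalue c0) or,
   when that vanishes, u itself (eigenvalue -c0). *)
Lemma eigen_sqrt_neg1 (L : fieldType) n (M : 'M[L]_n) (u : 'rV_n) (c0 : L) :
  c0 ^+ 2 = -1 -> u != 0 -> u *m M *m M = - u ->
  exists c (y : 'rV_n), [/\ c ^+ 2 = -1, y != 0 & y *m M = c *: y].
Proof.
move=> c0_sq u0 uMM; have [y0|y_neq0] := eqVneq (u *m M + c0 *: u) 0.
  exists (- c0), u; split; rewrite ?sqrrN //.
  by apply/eqP; rewrite scaleNr -addr_eq0 y0.
exists c0, (u *m M + c0 *: u); split=> //.
by rewrite mulmxDl uMM -scalemxAl scalerDr scalerA -expr2 c0_sq scaleN1r addrC.
Qed.

Lemma map_tridiag (F R : fieldType) (f : {rmorphism F -> R}) n a :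
  map_mx f (tridiag n a) = tridiag n (f a).
Proof.
by apply/matrixP => i j; rewrite !mxE; do 2?case: ifP; rewrite ?rmorph0 ?rmorph1.
Qed.

(* The reduction of the theorem to a statement about roots of unity: if
   C_n(a) is not LCD then, in an algebraic closure L of F, some c with
   c^2 = -1 is an eigenvalue of T_n(a); hence c - a = z + z^-1 is a root of
   U_(n+1), and z^2 is an (n+1)-th root of unity other than 1. *)
Lemma LCD_of_no_lucas_unit (F : fieldType) (L : closedFieldType)
    (f : {rmorphism F -> L}) n (a : F) :
  n.+1%:R != 0 :> F ->
  (forall c z t : L, c ^+ 2 = -1 -> z * t = 1 -> z + t = c - f a ->
     z ^+ 2 != 1 -> (z ^+ 2) ^+ n.+1 = 1 -> False) ->
  is_LCD (gen_Cn n a).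
Proof.
move=> N0 no_root; apply: gen_Cn_LCD => u uT; apply/eqP/negPn/negP => u0.
have u'0 : map_mx f u != 0 by rewrite map_mx_eq0.
have u'TT : map_mx f u *m tridiag n (f a) *m tridiag n (f a) = - map_mx f u.
  apply/eqP; rewrite -addr_eq0 addrC -{1}[map_mx f u]mulmx1 -mulmxA -mulmxDr.
  by rewrite -map_tridiag -(map_mx1 f) -!map_mxM -map_mxD -map_mxM uT map_mx0.
have [c0 c0_sq] : exists c0 : L, c0 ^+ 2 = -1.
  by have [c0] := closed_quadratic_root 0 (1 : L); rewrite mul0r sub0r; exists c0.
have [c [y [c_sq y0 yT]]] := eigen_sqrt_neg1 c0_sq u'0 u'TT.
have [z z_sq] := closed_quadratic_root (c - f a) 1.
have zt : z * (c - f a - z) = 1 by rewrite mulrBr -expr2 z_sq mulrC; ring.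
have U0 : lucasU (z + (c - f a - z)) n.+1 = 0.
  by rewrite addrC subrK (tridiag_eigen_lucas y0 yT).
have N0L : n.+1%:R != 0 :> L by rewrite -(rmorph_nat f) fmorph_eq0.
have [z2 z2N] := lucasU_root zt U0 N0L.
by apply: no_root c_sq zt _ z2 z2N; rewrite addrC subrK.
Qed.

Lemma card_pchar_nat (F : finFieldType) : [pchar F].-nat #|F|.
Proof.
have [p _ pF] := finPcharP F; rewrite (eq_pnat _ (pcharf_eq pF)) -cardsT.
exact: abelem_pgroup (fin_ring_pchar_abelem pF).
Qed.

Lemma natr_coprime_card (F : finFieldType) k : coprime k #|F| -> k%:R != 0 :> F.
Proof.
have [p p_pr pF] := finPcharP F; move=> ck; rewrite -(dvdn_pcharf pF).
have : p.-nat #|F| by rewrite -(eq_pnat _ (pcharf_eq pF)) card_pchar_nat.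
case/p_natP=> [[|e] cardE]; first by have := finNzRing_gt1 F; rewrite cardE.
apply/negP => pk; have := coprime_dvdl pk ck.
by rewrite prime_coprime // cardE expnS dvdn_mulr.
Qed.

(* q (q^2 - 1) / 2 = q * ((q - 1) / 2) * (q + 1) for odd q; an integer prime
   to it is thus prime to q, (q - 1) / 2 and (q + 1) / 2. *)
Lemma coprime_half_order m q : odd q -> coprime m (q * (q ^ 2 - 1) %/ 2) ->
  [/\ coprime m q, coprime m (q.-1 %/ 2) & coprime m (q.+1 %/ 2)].
Proof.
move=> q_odd; set k := (q %/ 2)%N.
have qE : q = k.*2.+1 by have := modn2 q; rewrite q_odd; lia.
have -> : (q.-1 %/ 2 = k)%N by lia.
have -> : (q.+1 %/ 2 = k.+1)%N by lia.
have -> : (q * (q ^ 2 - 1) %/ 2 = q * (k * (k.+1 * 2)))%N by rewrite {1 2}qE; nia.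
by rewrite !coprimeMr => /and4P[-> -> -> _].
Qed.

Lemma mod4_3_arith q : (q %% 4 = 3)%N ->
  [/\ q = (2 * (2 * (q %/ 4)).+1).+1, (2 %| q - 1)%N & (2 %| q ^ 4 - 1)%N].
Proof. by move=> q4; split; nia. Qed.

Lemma expn4_sub1 q : (q ^ 4 - 1 = (q ^ 2).-1 * (q ^ 2).+1)%N.
Proof. by nia. Qed.

Section FiniteFieldCases.
Variables (F : finFieldType) (L : closedFieldType) (f : {rmorphism F -> L}).
Local Notation q := #|F|.

Let charL : [pchar L].-nat q.
Proof. by rewrite (eq_pnat _ (fmorph_pchar f)) card_pchar_nat. Qed.

Let frob_im b : f b ^+ q = f b.
Proof. by rewrite -rmorphXn expf_card. Qed.

(* Part (i): -1 is a square mu^2 in F.  Then c = +-mu, so z + z^-1 = c - a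
   lies in F, and z^2 is both an (n+1)-th root of unity and a ((q -+ 1)/2)-th
   one; the coprimality hypothesis forces z^2 = 1. *)
Lemma LCD_split n (mu a : F) :
  odd q -> coprime n.+1 (q * (q ^ 2 - 1) %/ 2) -> mu ^+ 2 = -1 ->
  is_LCD (gen_Cn n a).
Proof.
move=> q_odd cop mu_sq; have [cq cq1 cq2] := coprime_half_order q_odd cop.
apply: (LCD_of_no_lucas_unit (f := f) (natr_coprime_card cq)).
move=> c z t c_sq zt xzt z2 z2N.
have c_mu : c = f mu \/ c = - f mu.
  have : (c - f mu) * (c + f mu) = 0.
    by rewrite -subr_sqr c_sq -rmorphXn mu_sq rmorphN1 subrr.
  by move/eqP; rewrite mulf_eq0 subr_eq0 addr_eq0 => /orP[] /eqP; [left|right].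
have xq : (z + t) ^+ q = z + t.
  by rewrite xzt; case: c_mu => ->; rewrite -!rmorphN -rmorphD frob_im.
have q_even1 : (2 %| q.-1)%N /\ (2 %| q.+1)%N.
  by have := modn2 q; rewrite q_odd; split; lia.
case/eqP: z2; case: (frob_trace_fixed_unit charL zt xq) => zq.
- by apply: (expr_coprime_eq1 z2N _ cq1); rewrite expr_half ?zq; case: q_even1.
- by apply: (expr_coprime_eq1 z2N _ cq2); rewrite expr_half ?zq; case: q_even1.
Qed.

(* Part (ii): q = 3 (mod 4), so every c with c^2 = -1 lies outside F and
   c^q = -c.  Then x = c - a satisfies x^(q^2) = x, hence z^(q^4 - 1) = 1; the
   gcd hypothesis brings this down to z^(q - 1) = 1, which would make x fixed
   by Frobenius, i.e. c = -c. *)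
Lemma LCD_inert n (a : F) :
  (q %% 4 = 3)%N -> coprime n.+1 q ->
  (gcdn n.+1 ((q ^ 4 - 1) %/ 2) %| (q - 1) %/ 2)%N ->
  is_LCD (gen_Cn n a).
Proof.
move=> q4 cq gd; have [qE q1_even q4_even] := mod4_3_arith q4.
have two : 2%:R != 0 :> L.
  rewrite -(rmorph_nat f) fmorph_eq0 natr_coprime_card // coprime2n qE.
  by rewrite -addn1 oddD mul2n odd_double.
apply: (LCD_of_no_lucas_unit (f := f) (natr_coprime_card cq)).
move=> c z t c_sq zt xzt _ z2N.
have c_frob : c ^+ q = - c.
  by rewrite qE exprS exprM c_sq exprS exprM sqrrN !expr1n mulr1 mulrN1.
have x_frob : (c - f a) ^+ q = - c - f a.
  by rewrite exprDn_pchar // exprNn_pchar // c_frob frob_im.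
have x_frob2 : (z + t) ^+ (q ^ 2) = z + t.
  rewrite xzt expnS expn1 exprM x_frob exprDn_pchar // !exprNn_pchar //.
  by rewrite c_frob frob_im opprK.
have charL2 : [pchar L].-nat (q ^ 2)%N by rewrite pnatX charL.
have z_q4 : z ^+ (q ^ 4 - 1) = 1.
  rewrite expn4_sub1.
  case: (frob_trace_fixed_unit charL2 zt x_frob2) => zq.
  - by rewrite exprM zq expr1n.
  - by rewrite mulnC exprM zq expr1n.
have w_q4 : (z ^+ 2) ^+ ((q ^ 4 - 1) %/ 2) = 1 by rewrite expr_half.
have w_gcd := expr_gcd_eq1 z2N w_q4.
have zq1 : z ^+ q.-1 = 1.
  case/dvdnP: gd => j jE.
  by rewrite -subn1 -expr_half // jE mulnC exprM w_gcd expr1n.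
have := frob_trace_fixed charL zt zq1; rewrite xzt x_frob => /eqP.
rewrite -subr_eq0 opprB addrA subrK -opprD oppr_eq0 -mulr2n -mulr_natl.
rewrite mulf_eq0 (negbTE two) /= => /eqP c0.
by move: c_sq; rewrite c0 expr0n /= => /eqP; rewrite eq_sym oppr_eq0 oner_eq0.
Qed.

End FiniteFieldCases.

(* Corollary 2.4. *)
Unset Implicit Arguments.

Theorem corollary2p4 (F : finFieldType) (n : nat) :
  odd #|F| -> (0 < n)%N ->
  let q := #|F| in
  (* (i) *)
  ((q %% 4 = 1)%N -> coprime n.+1 (q * (q ^ 2 - 1) %/ 2) ->
     forall mu : F, mu ^+ 2 = -1 ->
     forall a : F,
       a \notin [:: mu + 2; - mu + 2; mu - 2; - mu - 2] ->
       is_LCD (gen_Cn n a)) /\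
  (* (ii) *)
  ((q %% 4 = 3)%N -> coprime n.+1 q ->
     (gcdn n.+1 ((q ^ 4 - 1) %/ 2) %| (q - 1) %/ 2)%N ->
     forall a : F, is_LCD (gen_Cn n a)).
Proof.
move=> q_odd _ q; have [L [f _]] := countable_algebraic_closure F.
split.
- by move=> _ cop mu mu_sq a _; exact (LCD_split f q_odd cop mu_sq).
- by move=> q4 cop gd a; exact (LCD_inert f q4 cop gd).
Qed.
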